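(* Let $D$ be a strong symmetric digraph of order $n$ and $k$ an integer with $2\le k\le n$. Then $\lambda_k(D)\ge 2$ if and only if $D$ has no bridge.
   Context: A digraph $D$ is symmetric if for every arc $xy$, $yx$ is also an arc. A 2-cycle $xyx$ of a strong digraph $D$ is a bridge if $D-\{xy,yx\}$ is disconnected (i.e., its underlying graph is disconnected). For $S\subseteq V(D)$, $\lambda_S(D)$ is the maximum number of pairwise arc-disjoint strong subgraphs of $D$ containing $S$, and $\lambda_k(D)=\min\{\lambda_S(D): S\subseteq V(D), |S|=k\}$. *)

(* A digraph on a finite vertex type T is given by its arc
   relation D : rel T (no loops, no parallel arcs). *)
From mathcomp Require Import all_boot.
From mathcomp Require Import boolp.
Set Implicit Arguments. Unset Strict Implicit. Unset Printing Implicit Defensive.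

Section Digraphs.
Variable T : finType.

Definition loopless (D : rel T) : Prop := irreflexive D.

Definition symmetric_digraph (D : rel T) : Prop := forall x y, D x y -> D y x.

Definition strong (D : rel T) : Prop := forall x y, connect D x y.

Definition underlying_connected (D : rel T) : Prop :=
  forall x y, connect [rel u v | D u v || D v u] x y.

Definition del2 (D : rel T) (x y : T) : rel T :=
  [rel u v | D u v && ~~ (((u == x) && (v == y)) || ((u == y) && (v == x)))].

Definition is_bridge (D : rel T) (x y : T) : Prop :=
  x != y /\ D x y /\ D y x /\ ~ underlying_connected (del2 D x y).

Definition has_bridge (D : rel T) : Prop := exists x y, is_bridge D x y.

Definition subgraph (D : rel T) (H : {set T} * {set T * T}) : Prop :=
  forall a, a \in H.2 -> [/\ D a.1 a.2, a.1 \in H.1 & a.2 \in H.1].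

Definition strong_subgraph_containing (D : rel T) (S : {set T})
    (H : {set T} * {set T * T}) : Prop :=
  [/\ subgraph D H, S \subset H.1 &
      forall x y, x \in H.1 -> y \in H.1 ->
        connect [rel u v | (u, v) \in H.2] x y].

Definition packable (D : rel T) (S : {set T}) (m : nat) : Prop :=
  exists F : 'I_m -> {set T} * {set T * T},
    (forall i, strong_subgraph_containing D S (F i)) /\
    (forall i j, i != j -> [disjoint (F i).2 & (F j).2]).

(* lambda_S(D): the maximum m such that packable D S m.  For |S| >= 2 every
   strong subgraph containing S has an arc, so m <= #|T * T| and the maximum
   below is the true maximum. *)
Definition lambdaS (D : rel T) (S : {set T}) : nat :=
  \max_(m < #|{: T * T}|.+2 | `[< packable D S m >]) m.

Definition lambdak (D : rel T) (k : nat) : nat :=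
  \big[minn/#|{: T * T}|.+2]_(S : {set T} | #|S| == k) lambdaS D S.

End Digraphs.

(* Robbins' theorem: if no 2-cycle of D is a bridge, D has a strong orientation
   A, i.e. a strong spanning subdigraph without 2-cycles. It is built ear by
   ear: starting from a single vertex, take an arc wu leaving the oriented part
   W and a path from u back to W that avoids the 2-cycle wuw, which exists
   because wuw is not a bridge; the arc wu and that path orient a strong
   subdigraph on a larger vertex set. Then A and its reverse are two
   arc-disjoint strong spanning subdigraphs, so lambda_S(D) >= 2 for all S.
   Conversely, if xyx is a bridge, every strong subdigraph containing x and y
   uses the arc xy: otherwise xy could be removed from D, and with it yx by
   symmetry, without disconnecting D. Hence lambda_S(D) <= 1 for any S of size
   k containing x and y. *)

From mathcomp Require Import all_boot boolp.
Set Implicit Arguments. Unset Strict Implicit. Unset Printing Implicit Defensive.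

Section PathArcs.
Variable T : eqType.
Implicit Types (x y a b : T) (p : seq T).

Definition path_arcs x p : seq (T * T) := zip (x :: p) p.

Lemma path_arcs_cons x y p : path_arcs x (y :: p) = (x, y) :: path_arcs y p.
Proof. by []. Qed.

Lemma path_all_arcs (e : rel T) x p :
  path e x p = all (fun ab => e ab.1 ab.2) (path_arcs x p).
Proof. by elim: p x => //= y p IHp x; rewrite IHp. Qed.

Lemma mem_path_arcs x p a b :
  (a, b) \in path_arcs x p -> (a \in x :: p) && (b \in p).
Proof.
elim: p x => //= y p IHp x; case/predU1P => [[-> ->]|/IHp/andP[ap bp]].
  by rewrite !mem_head.
by rewrite in_cons ap orbT in_cons bp orbT.
Qed.

Lemma uniq_path_arcs_rev x p a b :
  uniq (x :: p) -> (a, b) \in path_arcs x p -> (b, a) \notin path_arcs x p.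
Proof.
elim: p x => //= y p IHp x /andP[x_yp uniq_yp].
have x_tgt c : (c, x) \notin path_arcs y p.
  by apply: contra x_yp => /mem_path_arcs/andP[_ xp]; rewrite in_cons xp orbT.
have x_neq_y : (x == y) = false by apply: contraNF x_yp => /eqP->; apply: mem_head.
case/predU1P => [[-> ->]|ab_arc]; rewrite in_cons negb_or.
  by rewrite xpair_eqE eq_sym x_neq_y x_tgt.
rewrite IHp // andbT; apply: contraTneq ab_arc => -[-> _].
exact: x_tgt.
Qed.

End PathArcs.

Section Connect.
Variables (T : finType) (e : rel T).

Lemma connect_to_last x p a :
  path e x p -> a \in x :: p -> connect e a (last x p).
Proof.
elim: p x a => [|y p IHp] x a /=; first by rewrite mem_seq1 => _ /eqP->.
case/andP=> exy e_yp /predU1P[->|]; last exact: IHp.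
by apply: connect_trans (connect1 exy) (IHp y y e_yp (mem_head _ _)).
Qed.

Lemma connect_first_entry (W : {set T}) x y :
  connect e x y -> y \in W ->
  exists2 t, t \in W & connect [rel a b | e a b && (a \notin W)] x t.
Proof.
move/connectP=> [p e_p ->{y}]; elim: p x e_p => [|y p IHp] x /=.
  by exists x.
case/andP=> exy e_yp lastW; have [xW|xNW] := boolP (x \in W); first by exists x.
have [t tW yt] := IHp y e_yp lastW; exists t => //.
by apply: connect_trans yt; apply: connect1; rewrite /= exy xNW.
Qed.

Lemma connect_exit_arc (W : {set T}) x y :
  connect e x y -> x \in W -> y \notin W ->
  exists a b, [/\ e a b, a \in W & b \notin W].
Proof.
move/connectP=> [p e_p ->{y}]; elim: p x e_p => [|y p IHp] x /=.
  by move=> _ ->.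
case/andP=> exy e_yp xW; have [yW|yNW] := boolP (y \in W); first exact: IHp.
by exists x, y.
Qed.

End Connect.

Lemma geq_bigmin_cond (I : finType) (P : pred I) (F : I -> nat) x j :
  P j -> \big[minn/x]_(i | P i) F i <= F j.
Proof.
move=> Pj; elim: (index_enum I) (mem_index_enum j) => // i r IHr.
rewrite big_cons; case/predU1P=> [<- | /IHr jr]; first by rewrite Pj geq_minl.
by case: (P i); first exact: leq_trans (geq_minr _ _) jr.
Qed.

Lemma card_superset (T : finType) (A : {set T}) k :
  #|A| <= k <= #|T| -> exists2 S : {set T}, A \subset S & #|S| = k.
Proof.
elim: k => [|k IHk] /andP[Ak kT]; first by exists A; last by apply/eqP; rewrite -leqn0.
have [<- | Ak'] := eqVneq #|A| k.+1; first by exists A.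
have [S AS cardS] : exists2 S : {set T}, A \subset S & #|S| = k.
  by apply: IHk; rewrite -ltnS ltn_neqAle Ak' Ak ltnW.
have /subsetPn[z _ zNS] : ~~ ([set: T] \subset S).
  by rewrite subTset; apply: contraTneq kT => ST; rewrite -cardS ST cardsT ltnn.
by exists (z |: S); [apply: subset_trans AS (subsetUr _ _) | rewrite cardsU1 zNS cardS].
Qed.

Section SymmetricDigraph.
Variables (T : finType) (D : rel T).
Hypothesis D_sym : symmetric_digraph D.

Lemma del2_symmetric x y : symmetric_digraph (del2 D x y).
Proof.
move=> a b /andP[Dab not_xy]; rewrite /del2 /= D_sym //=.
by apply: contra not_xy; rewrite orbC; case/orP=> /andP[-> ->]; rewrite ?orbT.
Qed.

Lemma underlying_connected_strong : underlying_connected D <-> strong D.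
Proof.
have sym_or : [rel u v | D u v || D v u] =2 D.
  by move=> u v /=; apply/idP/idP => [/orP[//|/D_sym]|->].
by split=> conD x y; [rewrite -(eq_connect sym_or) | rewrite (eq_connect sym_or)].
Qed.

Lemma del2_arc x y a b :
  D a b -> (a, b) != (x, y) -> a != y -> del2 D x y a b.
Proof.
by move=> Dab ab_xy ay; rewrite /del2 /= Dab (negbTE ay) orbF -xpair_eqE ab_xy.
Qed.

Lemma bridge_arc_in_strong_subgraph x y (S : {set T}) H :
  strong D -> ~ strong (del2 D x y) -> x \in S -> y \in S ->
  strong_subgraph_containing D S H -> (x, y) \in H.2.
Proof.
move=> D_strong not_strong xS yS [H_sub SH H_strong].
apply: contra_notT not_strong => xyNH.
have D'_sym : connect_sym (del2 D x y).
  by apply: sym_connect_sym => a b; apply/idP/idP; apply: del2_symmetric.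
have x_to_y : connect (del2 D x y) x y.
  have xy_H := H_strong x y (subsetP SH x xS) (subsetP SH y yS).
  have [t] := connect_first_entry xy_H (set11 y).
  rewrite inE => /eqP->; apply: connect_sub => a b /= /andP[ab_H]; rewrite inE => ay.
  have [Dab _ _] := H_sub _ ab_H; apply/connect1/del2_arc => //.
  by apply: contraNneq xyNH => <-.
have avoid_xy u v : connect [rel a b | D a b && (a \notin [set x; y])] u v ->
    connect (del2 D x y) u v.
  apply: connect_sub => a b /andP[Dab]; rewrite !inE negb_or => /andP[ax ay].
  by apply/connect1/del2_arc; rewrite // xpair_eqE (negbTE ax).
have to_x z : connect (del2 D x y) z x.
  have [t /set2P[]-> /avoid_xy // z_to_y] := connect_first_entry (D_strong z x) (set21 x y).
  by apply: connect_trans z_to_y _; rewrite D'_sym.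
by move=> a b; apply: connect_trans (to_x a) _; rewrite D'_sym.
Qed.

End SymmetricDigraph.

Section Robbins.
Variables (T : finType) (D : rel T).
Hypothesis D_strong : strong D.
Hypothesis D_bridgeless : forall x y, x != y -> D x y -> strong (del2 D x y).

Definition strong_orientation_on (W : {set T}) (A : rel T) : Prop :=
  [/\ subrel A D, forall a b, A a b -> (a \in W) && (b \in W),
      forall a b, A a b -> ~~ A b a & {in W &, forall x y, connect A x y}].

Lemma ear_path (W : {set T}) w u :
  w \in W -> u \notin W -> D w u ->
  exists p, [/\ path [rel a b | del2 D w u a b && (a \notin W)] u p,
                uniq (u :: p) & last u p \in W].
Proof.
move=> wW uNW Dwu; have wu : w != u by apply: contraNneq uNW => <-.
have [t tW /connectP[p0 p0_path t_last]] :=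
  connect_first_entry (D_bridgeless wu Dwu u w) wW.
move: tW; rewrite t_last; case: (shortenP p0_path) => p p_path p_uniq _.
by exists p.
Qed.

Section Ear.
Variables (W : {set T}) (w u : T) (p : seq T).
Hypotheses (wW : w \in W) (uNW : u \notin W) (Dwu : D w u).
Hypothesis p_path : path [rel a b | del2 D w u a b && (a \notin W)] u p.
Hypothesis p_uniq : uniq (u :: p).

Let ear_tail_arc a b : (a, b) \in path_arcs u p ->
  [/\ D a b, a \notin W & (a, b) != (u, w)].
Proof.
move: p_path; rewrite path_all_arcs => /allP/[apply]/andP[/andP[Dab]].
by rewrite negb_or -!xpair_eqE => /andP[_ ab_uw] aNW.
Qed.

Lemma ear_arc_D a b : (a, b) \in path_arcs w (u :: p) -> D a b.
Proof. by rewrite path_arcs_cons in_cons => /predU1P[[-> ->] // | /ear_tail_arc[]]. Qed.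

Lemma ear_arc_leaves a b :
  (a, b) \in path_arcs w (u :: p) -> (a \notin W) || (b \notin W).
Proof.
rewrite path_arcs_cons in_cons => /predU1P[[_ ->] | /ear_tail_arc[_ ->]] //.
by rewrite uNW orbT.
Qed.

Lemma ear_arc_anti a b :
  (a, b) \in path_arcs w (u :: p) -> (b, a) \notin path_arcs w (u :: p).
Proof.
have wu : w != u by apply: contraNneq uNW => <-.
rewrite path_arcs_cons in_cons => /predU1P[[-> ->]|ab_arc]; rewrite in_cons negb_or.
  rewrite xpair_eqE eq_sym andbb (negbTE wu) /=.
  by apply/negP => /ear_tail_arc[_ _]; rewrite eqxx.
have [_ _ ab_uw] := ear_tail_arc ab_arc.
rewrite uniq_path_arcs_rev // andbT.
by apply: contraNneq ab_uw => -[-> ->]; rewrite eqxx.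
Qed.

Lemma add_ear A :
  strong_orientation_on W A -> last u p \in W ->
  strong_orientation_on (W :|: [set z in u :: p])
    [rel a b | A a b || ((a, b) \in path_arcs w (u :: p))].
Proof.
move=> [A_D A_W A_anti A_conn] lastW.
set W' := W :|: _; set E := path_arcs w (u :: p).
set A' := [rel a b | A a b || ((a, b) \in E)].
have A_E_anti a b : A a b -> (b, a) \notin E.
  by move=> /A_W/andP[aW bW]; apply/negP => /ear_arc_leaves; rewrite aW bW.
have in_ear z : z \in w :: u :: p -> z \in W'.
  by rewrite in_cons => /predU1P[->|zp]; rewrite in_setU in_set ?wW ?zp ?orbT.
have A_sub x y : connect A x y -> connect A' x y.
  by apply: connect_sub => a b Aab; apply: connect1; rewrite /= Aab.
have E_path : path A' w (u :: p).
  by rewrite path_all_arcs; apply/allP => -[a b] /= ->; rewrite orbT.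
have to_w x : x \in W' -> connect A' x w.
  rewrite in_setU in_set => /orP[xW | xp]; first exact/A_sub/A_conn.
  apply: connect_trans (connect_to_last E_path _) (A_sub _ _ (A_conn _ _ lastW wW)).
  by rewrite in_cons xp orbT.
have from_w x : x \in W' -> connect A' w x.
  rewrite in_setU in_set => /orP[xW | xp]; first exact/A_sub/A_conn.
  by apply: (path_connect E_path); rewrite in_cons xp orbT.
split.
- by move=> a b /orP[/A_D | /ear_arc_D].
- move=> a b /orP[/A_W/andP[aW bW] | /mem_path_arcs/andP[aE bE]].
    by rewrite !in_setU aW bW.
  by rewrite !in_ear // in_cons bE orbT.
- move=> a b /orP[Aab | Eab]; rewrite /= negb_or; first by rewrite A_anti //= A_E_anti.
  by rewrite ear_arc_anti // andbT (contraL (@A_E_anti b a) Eab).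
by move=> x y /to_w xw /from_w wy; apply: connect_trans xw wy.
Qed.

End Ear.

Lemma ear_step (W : {set T}) A v :
  strong_orientation_on W A -> v \in W -> W != setT ->
  exists W' A', strong_orientation_on W' A' /\ W \proper W'.
Proof.
move=> orA vW WT; have /subsetPn[z _ zNW] : ~~ (setT \subset W) by rewrite subTset.
have [w [u [Dwu wW uNW]]] := connect_exit_arc (D_strong v z) vW zNW.
have [p [p_path p_uniq lastW]] := ear_path wW uNW Dwu.
exists (W :|: [set z in u :: p]), [rel a b | A a b || ((a, b) \in path_arcs w (u :: p))].
split; first exact: add_ear.
by apply/properP; split; [apply: subsetUl | exists u; rewrite // !inE eqxx orbT].
Qed.

Theorem Robbins_orientation : exists A : rel T,
  [/\ subrel A D, forall a b, A a b -> ~~ A b a & forall x y, connect A x y].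
Proof.
case: (pickP (@predT T)) => [v _ | T0]; last first.
  by exists [rel _ _ | false]; split=> // x; have := T0 x.
suff [A [A_D _ A_anti A_conn]] : exists A, strong_orientation_on setT A.
  by exists A; split=> // x y; apply: A_conn; rewrite inE.
have grow n W (A : rel T) : #|~: W| < n -> v \in W -> strong_orientation_on W A ->
    exists A, strong_orientation_on setT A.
  elim: n W A => // n IHn W A cardW vW orA.
  have [WT | WT] := eqVneq W setT; first by exists A; rewrite -WT.
  have [W' [A' [orA' WW']]] := ear_step orA vW WT.
  apply: (IHn W' A' _ (subsetP (proper_sub WW') v vW) orA').
  by rewrite -ltnS (leq_trans _ cardW) // ltnS proper_card // properC.
apply: (grow _ [set v] [rel _ _ | false] (ltnSn _) (set11 v)).
by split=> // x y /set1P-> /set1P->; apply: connect0.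
Qed.

End Robbins.

Section Packing.
Variables (T : finType) (D : rel T) (S : {set T}).

Lemma strong_spanning_subgraph (A : rel T) :
  subrel A D -> (forall x y, connect A x y) ->
  strong_subgraph_containing D S (setT, [set a | A a.1 a.2]).
Proof.
move=> A_D A_conn; split=> [a | | x y _ _]; first by rewrite inE => /A_D; rewrite !inE.
  exact: subsetT.
by rewrite (@eq_connect _ _ A) // => a b; rewrite /= inE.
Qed.

Lemma packable2 H1 H2 :
  strong_subgraph_containing D S H1 -> strong_subgraph_containing D S H2 ->
  [disjoint H1.2 & H2.2] -> packable D S 2.
Proof.
move=> H1_strong H2_strong H12.
exists (fun i : 'I_2 => if val i == 0 then H1 else H2); split; first by case=> [[|i] ?].
by case=> [[|[|i]] ?] // [[|[|j]] ?] //= _; rewrite disjoint_sym.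
Qed.

Lemma orientation_packable2 (A : rel T) :
  symmetric_digraph D -> subrel A D -> (forall a b, A a b -> ~~ A b a) ->
  (forall x y, connect A x y) -> packable D S 2.
Proof.
move=> D_sym A_D A_anti A_conn.
apply: (packable2 (strong_spanning_subgraph A_D A_conn)
                  (@strong_spanning_subgraph [rel a b | A b a] _ _)).
- by move=> a b /A_D/D_sym.
- by move=> x y; rewrite connect_rev; apply: A_conn.
by rewrite disjoints_subset; apply/subsetP => -[a b]; rewrite !inE /=; apply: A_anti.
Qed.

Lemma packable_common_arc a m :
  (forall H, strong_subgraph_containing D S H -> a \in H.2) ->
  packable D S m -> m <= 1.
Proof.
move=> a_in [F [F_strong F_disj]]; rewrite leqNgt; apply/negP => m_gt1.
have := F_disj (Ordinal (ltnW m_gt1)) (Ordinal m_gt1) isT.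
by move/disjointFr/(_ (a_in _ (F_strong _))); rewrite a_in.
Qed.

Lemma lambdaS_leq n : (forall m, packable D S m -> m <= n) -> lambdaS D S <= n.
Proof. by move=> packable_le; apply/bigmax_leqP => m /asboolP/packable_le. Qed.

Lemma packable_lambdaS m :
  m < #|{: T * T}|.+2 -> packable D S m -> m <= lambdaS D S.
Proof.
move=> m_lt pk; apply: (@leq_bigmax_cond _ _ (@nat_of_ord _) (Ordinal m_lt)).
exact/asboolP.
Qed.

End Packing.

Lemma lambdak_leq (T : finType) (D : rel T) k (S : {set T}) :
  #|S| = k -> lambdak D k <= lambdaS D S.
Proof. by move=> cardS; apply: geq_bigmin_cond; rewrite /= cardS. Qed.

Lemma leq_lambdak (T : finType) (D : rel T) k n :
  n <= #|{: T * T}|.+2 -> (forall S : {set T}, #|S| = k -> n <= lambdaS D S) ->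
  n <= lambdak D k.
Proof.
move=> n_le n_lambdaS; apply: (big_ind (leq n)) => // [a b | S /eqP/n_lambdaS //].
by rewrite leq_min => -> ->.
Qed.

Theorem theorem4p4 (T : finType) (D : rel T) (k : nat) :
  loopless D -> symmetric_digraph D -> strong D ->
  2 <= k <= #|T| ->
  (2 <= lambdak D k <-> ~ has_bridge D).
Proof.
move=> _ D_sym D_strong /andP[k_ge2 k_leT].
have strongE x y : underlying_connected (del2 D x y) <-> strong (del2 D x y).
  exact/underlying_connected_strong/del2_symmetric.
split=> [lambda_ge2 [x [y [xy [_ [_ /strongE not_strong]]]]] | no_bridge].
  have [S xyS cardS] : exists2 S : {set T}, [set x; y] \subset S & #|S| = k.
    by apply: card_superset; rewrite cards2 xy k_ge2.
  have [xS yS] : x \in S /\ y \in S by rewrite !(subsetP xyS) ?set21 ?set22.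
  suff : lambdak D k <= 1 by rewrite leqNgt lambda_ge2.
  apply: leq_trans (lambdak_leq D cardS) (lambdaS_leq _) => m.
  apply: (packable_common_arc (a := (x, y))) => H.
  exact: bridge_arc_in_strong_subgraph.
have bridgeless x y : x != y -> D x y -> strong (del2 D x y).
  move=> xy Dxy; apply/strongE; apply: contra_notP no_bridge => not_uc.
  by exists x, y; do !split => //; apply: D_sym.
have [A [A_D A_anti A_conn]] := Robbins_orientation D_strong bridgeless.
apply: leq_lambdak => // S _; apply: packable_lambdaS.
  by rewrite !ltnS card_prod muln_gt0 andbb (leq_trans _ k_leT) // ltnW.
exact: orientation_packable2 D_sym A_D A_anti A_conn.
Qed.
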